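(* Let $K$ be a coloring of the nodes of the network $\mathcal{G}_{mn}$. Suppose that for any two nodes $c,d$ of the same color and every color $k$: (i) the number of nodes of color $k$ in the same row as $c$ and distinct from $c$ equals the number of nodes of color $k$ in the same row as $d$ and distinct from $d$; and (ii) the analogous equality holds for columns. (That is, $K$ is balanced for the network obtained from $\mathcal{G}_{mn}$ by deleting the diagonal arrows and ignoring internal arrows.) Then $K$ is balanced for $\mathcal{G}_{mn}$.
   Context: For integers $m,n\ge1$, the network $\mathcal{G}_{mn}$ has node set $\{(i,j):1\le i\le m,\ 1\le j\le n\}$ ($i$ indexes rows, $j$ columns), all nodes of the same type. For each ordered pair of distinct nodes $(c,d)$ there is exactly one arrow with head $c$ and tail $d$, whose type is: ''row'' if $c,d$ lie in the same row, ''column'' if they lie in the same column, ''diagonal'' otherwise; in addition each node has an internal arrow from itself to itself (a fourth type). A coloring is a map from nodes to a set of colors. A coloring is balanced if whenever nodes $c,d$ have the same color, for every arrow type and every color $k$ the number of input arrows of that type to $c$ with tail of color $k$ equals the corresponding number for $d$. *)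

From mathcomp Require Import all_boot.
Set Implicit Arguments. Unset Strict Implicit. Unset Printing Implicit Defensive.

(* Nodes of G_mn: pairs (i, j) with i : 'I_m the row, j : 'I_n the column
   (0-based indexing of rows 1..m, columns 1..n). *)
Definition node (m n : nat) : finType := ('I_m * 'I_n)%type.

Inductive arrow_type := RowA | ColA | DiagA | IntA.

Definition arrow_type_eqb (a b : arrow_type) : bool :=
  match a, b with
  | RowA, RowA | ColA, ColA | DiagA, DiagA | IntA, IntA => true
  | _, _ => false end.

(* Type of the unique arrow with head c and tail d in G_mn. For c = d this
   is the internal arrow (the only arrow from a node to itself). *)
Definition arrow_of (m n : nat) (c d : node m n) : arrow_type :=
  if c == d then IntA
  else if c.1 == d.1 then RowA
  else if c.2 == d.2 then ColA
  else DiagA.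

Definition input_count (m n : nat) (C : eqType) (K : node m n -> C)
    (t : arrow_type) (k : C) (c : node m n) : nat :=
  #|[set d : node m n | arrow_type_eqb (arrow_of c d) t && (K d == k)]|.

Definition balanced_Gmn (m n : nat) (C : eqType) (K : node m n -> C) : Prop :=
  forall c d : node m n, K c = K d ->
    forall (t : arrow_type) (k : C), input_count K t k c = input_count K t k d.

Definition row_count (m n : nat) (C : eqType) (K : node m n -> C)
    (k : C) (c : node m n) : nat :=
  #|[set d : node m n | (d != c) && (d.1 == c.1) && (K d == k)]|.

Definition col_count (m n : nat) (C : eqType) (K : node m n -> C)
    (k : C) (c : node m n) : nat :=
  #|[set d : node m n | (d != c) && (d.2 == c.2) && (K d == k)]|.

(* Every node is the tail of exactly one arrow with head c, so for each colour
   k the four input counts of c add up to the number of nodes of colour k.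
   The row and column counts are equal at equally coloured nodes by
   hypothesis and the internal count only depends on the colour of c, so the
   diagonal count is forced to agree as well. *)

From mathcomp Require Import all_boot.

Lemma card_set_sum_nat (T : finType) (P : pred T) :
  #|[set x | P x]| = \sum_x (P x : nat).
Proof. by rewrite -sum1dep_card big_mkcond; apply: eq_bigr => x _; case: (P x). Qed.

Section InputCounts.

Variables (m n : nat) (C : eqType) (K : node m n -> C).
Implicit Types (c : node m n) (k : C).

Lemma input_count_RowA k c : input_count K RowA k c = row_count K k c.
Proof.
apply: eq_card => -[i' j']; rewrite !inE /arrow_of; case: c => i j /=.
rewrite !xpair_eqE /= [i' == i]eq_sym [j' == j]eq_sym.
by case: (i == i'); case: (j == j').
Qed.

Lemma input_count_ColA k c : input_count K ColA k c = col_count K k c.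
Proof.
apply: eq_card => -[i' j']; rewrite !inE /arrow_of; case: c => i j /=.
rewrite !xpair_eqE /= [i' == i]eq_sym [j' == j]eq_sym.
by case: (i == i'); case: (j == j').
Qed.

Lemma input_count_IntA k c : input_count K IntA k c = (K c == k).
Proof.
rewrite /input_count (_ : [set _ | _] = [set d | (d == c) && (K c == k)]).
  by rewrite card_set_sum_nat (bigD1 c) //= eqxx big1 ?addn0 // => d /negPf ->.
apply/setP => d; rewrite !inE /arrow_of eq_sym.
by case: eqP => [-> | _] //; do 2!case: (_ == _).
Qed.

Lemma card_color_input_counts k c :
  #|[set d | K d == k]| =
  input_count K RowA k c + input_count K ColA k c + input_count K DiagA k c
  + input_count K IntA k c.
Proof.
rewrite /input_count !card_set_sum_nat -!big_split; apply: eq_bigr => d _ /=.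
by case: (arrow_of c d); case: (K d == k).
Qed.

Lemma input_count_DiagA k c :
  input_count K DiagA k c =
  #|[set d | K d == k]| - (row_count K k c + col_count K k c + (K c == k)).
Proof.
rewrite (card_color_input_counts k c) input_count_RowA input_count_ColA.
by rewrite input_count_IntA addnAC addKn.
Qed.

End InputCounts.

Theorem lemma3p3 (m n : nat) (C : eqType) (K : node m n -> C) :
  (forall c d : node m n, K c = K d -> forall k : C,
     row_count K k c = row_count K k d /\ col_count K k c = col_count K k d) ->
  balanced_Gmn K.
Proof.
move=> row_col_balanced c d Kcd t k.
have [row_cd col_cd] := row_col_balanced c d Kcd k.
case: t.
- by rewrite !input_count_RowA.
- by rewrite !input_count_ColA.
- by rewrite !input_count_DiagA row_cd col_cd Kcd.
- by rewrite !input_count_IntA Kcd.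
Qed.
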